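(* Let $f\in\mathbb Z[x]$ with $3\nmid N_1(f)$, and for $i\geq1$ let $\omega_i=e^{2\pi i/3^i}$. (i) There exist $J\in\{0,1,2\}$, a sign $\pm$, and integers $A,b$ with $\pm\omega_1^Jf(\omega_1)=\delta+3A(\omega_1-1)+9b$, where $\delta=1,2,4$ according as $N_1(f)\equiv 1,4,7\pmod 9$; and then $\pm\omega_1^Jf(\omega_1)(1-\omega_1)=\delta(1-\omega_1)+9A+9B(1-\omega_1)$ with $B=b-A$. (ii) For every $i\geq 2$ there exist $h\in\mathbb Z[x]$ and $u(x)=\pm x^I(1+x)^J(x^4+1)^K$ with integers $I,J,K\geq 0$ (so $u(\omega_i)$ is a unit) such that $u(\omega_i)f(\omega_i)=1+(\omega_i-1)^5h(\omega_i)$. (iii) If in (ii) $3\mid h(1)$, then there exist $t\in\mathbb Z[x]$ and $u$ of the same form $\pm x^I(1+x)^J(x^4+1)^K$ with $u(\omega_i)f(\omega_i)=1+(\omega_i-1)^7t(\omega_i)$. (iv) If in (ii) $i=2$ and $3\nmid h(1)$, then for some $u$ of the form $\pm x^I(1+x)^J(x^4+1)^K$ and some $t\in\mathbb Z[x]$, $(1-\omega_2)u(\omega_2)f(\omega_2)=1-\omega_2+3\delta(\omega_2)+3(\omega_2-1)^2t(\omega_2)$ with $\delta(x)=x$ or $\delta(x)=-1$.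
   Context: $N_1(f)=f(\omega_1)f(\omega_1^2)$. *)

From HB Require Import structures.
From mathcomp Require Import all_boot all_order all_algebra.
From mathcomp Require Import reals trigo.
From mathcomp.real_closed Require Import complex.
Set Implicit Arguments. Unset Strict Implicit. Unset Printing Implicit Defensive.
Import Order.TTheory GRing.Theory Num.Theory.
Local Open Scope ring_scope.

Definition omega (R : realType) (i : nat) : R[i] :=
  Complex (cos (2 * pi / (3 ^+ i)%:R)) (sin (2 * pi / (3 ^+ i)%:R)).

Definition ev (R : realType) (f : {poly int}) (w : R[i]) : R[i] :=
  (map_poly (fun z : int => z%:~R) f).[w].

Definition N1 (R : realType) (f : {poly int}) : R[i] :=
  ev f (omega R 1) * ev f (omega R 1 ^+ 2).

Definition upoly (s : bool) (I J K : nat) : {poly int} :=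
  (-1) ^+ s *: ('X ^+ I * (1 + 'X) ^+ J * ('X ^+ 4 + 1) ^+ K).

From HB Require Import structures.
From mathcomp Require Import all_boot all_order all_algebra.
From mathcomp Require Import reals trigo.
From mathcomp.real_closed Require Import complex.
From mathcomp Require Import ring lra zify.
Import Order.TTheory GRing.Theory Num.Theory.
Set Implicit Arguments. Unset Strict Implicit. Unset Printing Implicit Defensive.
Local Open Scope ring_scope.

(* Put l = w - 1 for w = omega i, i >= 2.  Then 3 = l^6 q(w) in Z[w], and every
   element of Z[w] is congruent to an integer modulo l.  Hence a congruence
   u f = 1 mod l^k, with u a unit, improves to one modulo l^(k+1) once we have
   a unit u_k = 1 +- l^k mod l^(k+1): multiply by a suitable power of u_k.  Units
   of the form +-x^I (1+x)^J (x^4+1)^K do this for k = 1, 2, 3, 4, 6 but not for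
   k = 5, which is why (iii) needs 3 | h(1).  The start f(w) = f(1) mod l is a
   unit mod l because N_1(f) = (a + b)^2 mod 3 when f(omega 1) = a + b omega 1.
   For (iv), l^6 = 3 r(w) with r(1) = -1, so (1 - w) u f = 1 - w - 3 r h, and
   each factor -x^3 (1+x)^3 shifts the l-coefficient of -r h by -1 modulo 3.
   Part (i) is arithmetic in Z[omega 1]: after multiplying f(omega 1) = a + b omega 1
   by a power of omega 1 its omega 1-coefficient is some 3E, and then
   N_1(f) = (a' + 3E)^2 mod 9 determines a' + 3E mod 9 up to sign. *)

Section RootsOfUnity.
Variable R : realType.

Definition cis (a : R) : R[i] := Complex (cos a) (sin a).

Lemma cisD a b : cis a * cis b = cis (a + b).
Proof. by rewrite /cis /= cosD sinD; congr Complex; ring. Qed.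

Lemma cisX a n : cis a ^+ n = cis (n%:R * a).
Proof.
elim: n => [|n IHn]; first by rewrite mul0r /cis cos0 sin0.
by rewrite exprS IHn cisD mulrSr mulrDl mul1r addrC.
Qed.

Lemma omega_expn3 i k : omega R (k + i) ^+ (3 ^ k) = omega R i.
Proof.
rewrite [omega _ (k + i)]/omega -/(cis _) cisX; congr cis.
rewrite !natrXE !natrX exprD; field.
by rewrite !expf_neq0 // pnatr_eq0.
Qed.

Lemma omega1_cube : omega R 1 ^+ 3 = 1.
Proof.
rewrite /omega -/(cis _) cisX /cis.
have -> : 3%:R * (2 * pi / (3 ^+ 1)%:R) = pi *+ 2 :> R by rewrite mulr2n; field.
by rewrite cos2pi sin2pi.
Qed.

Lemma omega1_neq1 : omega R 1 != 1.
Proof.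
apply/eqP => /(congr1 (@complex.Im R)) /= Im_eq.
have : 0 < sin (2 * pi / (3 ^+ 1)%:R :> R).
  apply: sin_gt0_pi; have := pi_gt0 R; rewrite expr1 => ?; apply/andP; split; lra.
by rewrite Im_eq ltxx.
Qed.

Lemma omega1_sqr : omega R 1 ^+ 2 = - omega R 1 - 1.
Proof.
have : (omega R 1 - 1) * (omega R 1 ^+ 2 + omega R 1 + 1) = 0.
  by rewrite -[RHS](subrr 1) -{3}omega1_cube; ring.
move/eqP; rewrite mulf_eq0 subr_eq0 (negPf omega1_neq1) /= => /eqP Phi3.
by rewrite -[LHS]subr0 -Phi3; ring.
Qed.

Lemma omega2_Phi9 : omega R 2 ^+ 6 = - omega R 2 ^+ 3 - 1.
Proof. by rewrite (exprM _ 3 2) (omega_expn3 1 1) omega1_sqr. Qed.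
End RootsOfUnity.

Section Evaluation.
Variable R : realType.
Implicit Types (p q : {poly int}) (w : R[i]).

Lemma evD p q w : ev (p + q) w = ev p w + ev q w.
Proof. by rewrite /ev rmorphD hornerD. Qed.
Lemma evM p q w : ev (p * q) w = ev p w * ev q w.
Proof. by rewrite /ev rmorphM hornerM. Qed.
Lemma evN p w : ev (- p) w = - ev p w.
Proof. by rewrite /ev rmorphN hornerN. Qed.
Lemma evXn p n w : ev (p ^+ n) w = ev p w ^+ n.
Proof. by rewrite /ev rmorphXn horner_exp. Qed.
Lemma evX w : ev 'X w = w.
Proof. by rewrite /ev map_polyX hornerX. Qed.
Lemma evC c w : ev c%:P w = c%:~R.
Proof. by rewrite /ev map_polyC hornerC. Qed.

Definition evE := (evXn, evD, evM, evN, evX, evC).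

Lemma ev_upoly s I J K w :
  ev (upoly s I J K) w = (-1) ^+ s * w ^+ I * (1 + w) ^+ J * (w ^+ 4 + 1) ^+ K.
Proof. by rewrite /upoly -mul_polyC !evE; case: s; rewrite /= ?expr0 ?expr1; ring. Qed.

Lemma ev_upolyM s I J K s' I' J' K' w :
  ev (upoly s I J K) w * ev (upoly s' I' J' K') w
  = ev (upoly (s (+) s') (I + I') (J + J') (K + K')) w.
Proof. by rewrite !ev_upoly signr_addb !exprD; ring. Qed.

Lemma ev_upoly_expM s I J K s' I' J' K' c w :
  exists s'' I'' J'' K'', ev (upoly s'' I'' J'' K'') w
     = ev (upoly s I J K) w ^+ c * ev (upoly s' I' J' K') w.
Proof.
elim: c => [|c [s'' [I'' [J'' [K'' IHc]]]]]; first by exists s', I', J', K'; rewrite mul1r.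
exists (s (+) s''), (I + I'')%N, (J + J'')%N, (K + K'')%N.
by rewrite -ev_upolyM IHc exprS mulrA.
Qed.

Lemma ev_taylor1 p w : exists p', ev p w = p.[1]%:~R + (w - 1) * ev p' w.
Proof.
have /factor_theorem [p' Dp] : root (p - p.[1]%:P) 1.
  by rewrite /root hornerD hornerN hornerC subrr.
exists p'; have Ep : p = p' * ('X - 1%:P) + p.[1]%:P by rewrite -Dp subrK.
by rewrite {1}Ep !evE; ring.
Qed.

Lemma expr_one_add (x w : R[i]) k e A c :
  x = 1 + e%:~R * (w - 1) ^+ k.+1 + (w - 1) ^+ k.+2 * ev A w ->
  exists Ac, x ^+ c = 1 + (c%:Z * e)%:~R * (w - 1) ^+ k.+1 + (w - 1) ^+ k.+2 * ev Ac w.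
Proof.
move=> Dx; elim: c => [|c [Ac IHc]]; first by exists 0; rewrite !evE; ring.
exists (Ac + A + (c%:Z * e * e)%:P * ('X - 1) ^+ k + (c%:Z * e)%:P * ('X - 1) ^+ k.+1 * A
   + Ac * (e%:P * ('X - 1) ^+ k.+1 + ('X - 1) ^+ k.+2 * A)).
by rewrite exprSr IHc Dx !evE !exprS; ring.
Qed.

Definition congr1_upto_unit w j f := exists h s I J K,
  ev (upoly s I J K) w * ev f w = 1 + (w - 1) ^+ j * ev h w.

End Evaluation.

Definition delta_spec (n d : int) : Prop :=
  [\/ ((n %% 9)%Z = 1 /\ d = 1), ((n %% 9)%Z = 4 /\ d = 2) | ((n %% 9)%Z = 7 /\ d = 4)].

Lemma delta_spec_sqr n v : (9 %| n - v ^+ 2)%Z -> ~~ (3 %| v)%Z ->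
  exists (s : bool) (d b : int), delta_spec n d /\ (-1) ^+ s * v = d + 9 * b.
Proof.
move=> /dvdzP [m Dn] v3; set V := (v %/ 9)%Z; set r := (v %% 9)%Z.
have Dv : v = V * 9 + r := divz_eq v 9.
have [W Dv2] : exists W, v ^+ 2 = W * 9 + r ^+ 2.
  by exists (9 * V ^+ 2 + 2 * V * r); rewrite {1}Dv; ring.
have : (r = 1 \/ r = 2 \/ r = 4 \/ r = 5 \/ r = 7 \/ r = 8)%Z.
  by move: v3; rewrite /r; lia.
rewrite /delta_spec; case=> [|[|[|[|[|]]]]] Dr; rewrite Dr expr2 in Dv2; rewrite Dr in Dv.
- by exists false, 1, V; split; [constructor 1 | rewrite expr0]; lia.
- by exists false, 2, V; split; [constructor 2 | rewrite expr0]; lia.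
- by exists false, 4, V; split; [constructor 3 | rewrite expr0]; lia.
- by exists true, 4, (- V - 1); split; [constructor 3 | rewrite expr1]; lia.
- by exists true, 2, (- V - 1); split; [constructor 2 | rewrite expr1]; lia.
- by exists true, 1, (- V - 1); split; [constructor 1 | rewrite expr1]; lia.
Qed.

Section EisensteinIntegers.
Variables (F : comNzRingType) (w : F).
Hypothesis w_sqr : w ^+ 2 = - w - 1.

Lemma eisenstein_normal_form x (c e n : int) :
  x = c%:~R + e%:~R * w -> n = c ^+ 2 - c * e + e ^+ 2 ->
  (3 %| e)%Z -> ~~ (3 %| n)%Z ->
  exists (s : bool) (A b d : int), [/\ delta_spec n d,
    (-1) ^+ s * x = d%:~R + 3 * A%:~R * (w - 1) + 9 * b%:~R &
    (-1) ^+ s * x * (1 - w) = d%:~R * (1 - w) + 9 * A%:~R + 9 * (b - A)%:~R * (1 - w)].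
Proof.
move=> Dx Dn /dvdzP [E De] n3; rewrite {e}De in Dx Dn; set v := c + 3 * E.
have Dn' : n = v ^+ 2 - 9 * c * E by rewrite Dn /v; ring.
have v3 : ~~ (3 %| v)%Z.
  apply: contra n3 => /dvdzP [u Du]; apply/dvdzP.
  by exists (3 * u ^+ 2 - 3 * c * E); rewrite Dn' Du; ring.
have n_v2 : (9 %| n - v ^+ 2)%Z by apply/dvdzP; exists (- c * E); rewrite Dn'; ring.
have [s [d [b [dn Dv]]]] := delta_spec_sqr n_v2 v3.
have Dd : d = (-1) ^+ s * v - 9 * b by rewrite Dv; ring.
have Dsx : (-1) ^+ s * x = d%:~R + 3 * ((-1) ^+ s * E)%:~R * (w - 1) + 9 * b%:~R.
  by rewrite Dx Dd /v; case: (s); rewrite /= ?expr0 ?expr1; ring.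
by exists s, ((-1) ^+ s * E), b, d; split=> //; rewrite Dsx; ring: w_sqr.
Qed.

Lemma eisenstein_rotate (a b : int) : ~~ (3 %| a ^+ 2 - a * b + b ^+ 2)%Z ->
  exists (J : nat) (c e : int), [/\ (J < 3)%N, (3 %| e)%Z,
    w ^+ J * (a%:~R + b%:~R * w) = c%:~R + e%:~R * w &
    c ^+ 2 - c * e + e ^+ 2 = a ^+ 2 - a * b + b ^+ 2].
Proof.
move=> n3; have [b3|b3] := boolP (3 %| b)%Z.
  by exists 0%N, a, b; split=> //; rewrite mul1r.
have [a3|a3] := boolP (3 %| a)%Z.
  exists 2%N, (b - a), (- a); split=> //; first by move: a3; lia.
    by rewrite !rmorphB /=; ring: w_sqr.
  by ring.
exists 1%N, (- b), (a - b); split=> //; last by ring.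
  apply: contraNT n3 => ab3; have /dvdzP [u Du] : (3 %| a + b)%Z by move: a3 b3 ab3; lia.
  by apply/dvdzP; exists (3 * u ^+ 2 - a * b); rewrite (_ : a = u * 3 - b); [ring | lia].
by rewrite !rmorphB /=; ring: w_sqr.
Qed.
End EisensteinIntegers.

Lemma poly_decomp_Phi3 (f : {poly int}) :
  exists g (a b : int), f = g * ('X ^+ 2 + 'X + 1) + (a%:P + b%:P * 'X).
Proof.
elim/poly_ind: f => [|p c [g [a [b ->]]]]; first by exists 0, 0, 0; rewrite !mul0r !add0r.
by exists (g * 'X + b%:P), (c - b), (a - b); rewrite !polyCB; ring.
Qed.

Section OmegaOne.
Variable R : realType.
Local Notation w := (omega R 1).

Lemma N1_decomp f : exists a b : int, [/\ ev f w = a%:~R + b%:~R * w,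
  N1 R f = (a ^+ 2 - a * b + b ^+ 2)%:~R & (3 %| f.[1] - (a + b))%Z].
Proof.
have w_sqr := omega1_sqr R.
have [g [a [b Df]]] := poly_decomp_Phi3 f.
have ev_root z : z ^+ 2 = - z - 1 -> ev f z = a%:~R + b%:~R * z.
  by move=> z_sqr; rewrite Df !evE z_sqr; ring.
have Dfw2 : ev f (w ^+ 2) = a%:~R + b%:~R * w ^+ 2 by apply: ev_root; ring: w_sqr.
exists a, b; split; first exact: ev_root.
  by rewrite /N1 Dfw2 ev_root //; ring: w_sqr.
by apply/dvdzP; exists g.[1]; rewrite Df !(hornerD, hornerM, hornerC, hornerX, hornerXn); ring.
Qed.

Lemma N1_not_dvd3_horner1 f (n : int) :
  N1 R f = n%:~R -> ~~ (3 %| n)%Z -> ~~ (3 %| f.[1])%Z.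
Proof.
have [a [b [_ DN f1]]] := N1_decomp f; rewrite DN => /intr_inj <- n3.
apply: contra n3 => f3; have /dvdzP [u Du] : (3 %| a + b)%Z by move: f1 f3; lia.
by apply/dvdzP; exists (3 * u ^+ 2 - a * b); rewrite (_ : a = u * 3 - b); [ring | lia].
Qed.

Lemma omega1_normal_form f (n : int) :
  N1 R f = n%:~R -> ~~ (3 %| n)%Z ->
  exists (J : nat) (s : bool) (A b d : int), [/\ (J < 3)%N, delta_spec n d,
    (-1) ^+ s * w ^+ J * ev f w = d%:~R + 3 * A%:~R * (w - 1) + 9 * b%:~R &
    (-1) ^+ s * w ^+ J * ev f w * (1 - w)
      = d%:~R * (1 - w) + 9 * A%:~R + 9 * (b - A)%:~R * (1 - w)].
Proof.
have [a [b [Df DN _]]] := N1_decomp f; rewrite DN => /intr_inj Dn n3.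
have n3' : ~~ (3 %| a ^+ 2 - a * b + b ^+ 2)%Z by rewrite Dn.
have [J [c [e [J3 e3 DJ Dce]]]] := eisenstein_rotate (omega1_sqr R) n3'.
have Dn' : n = c ^+ 2 - c * e + e ^+ 2 by rewrite Dce Dn.
have [s [A [B [d [dn E1 E2]]]]] := eisenstein_normal_form (omega1_sqr R) DJ Dn' e3 n3.
by exists J, s, A, B, d; split=> //; rewrite -[_ * w ^+ J * ev f w]mulrA Df.
Qed.
End OmegaOne.

Lemma exists_mul_add_dvd3 (e a : int) :
  ~~ (3 %| e)%Z -> exists c : nat, (3 %| c%:Z * e + a)%Z.
Proof.
move=> e3; have : (e %% 3 = 1 \/ e %% 3 = 2)%Z by lia.
have : (a %% 3 = 0 \/ a %% 3 = 1 \/ a %% 3 = 2)%Z by lia.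
by case=> [|[|]] ? [] ?; [exists 0%N|exists 0%N|exists 2%N|exists 1%N|exists 1%N|exists 2%N]; lia.
Qed.

Section Lifting.
Variables (R : realType) (w : R[i]) (q : {poly int}).
Hypothesis three_w1 : 3 = (w - 1) ^+ 6 * ev q w.

Lemma three_dvd_w1 : 3 = (w - 1) * ev (('X - 1) ^+ 5 * q) w.
Proof. by rewrite !evE three_w1; ring. Qed.

Lemma eq_mod_three (a b c : R[i]) : a - b = (3 - (w - 1) ^+ 6 * ev q w) * c -> a = b.
Proof. by rewrite -three_w1 subrr mul0r => /eqP; rewrite subr_eq0 => /eqP. Qed.

Lemma congr1_upto_unit_lift f k s I J K e :
  ~~ (3 %| e)%Z ->
  (exists A, ev (upoly s I J K) w = 1 + e%:~R * (w - 1) ^+ k.+1 + (w - 1) ^+ k.+2 * ev A w) ->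
  congr1_upto_unit w k.+1 f -> congr1_upto_unit w k.+2 f.
Proof.
move=> e3 [A Dg] [h [s' [I' [J' [K' Duf]]]]].
have [h' Dh] := ev_taylor1 h w.
have [c /dvdzP [m Dm]] := exists_mul_add_dvd3 h.[1] e3.
have [Ac Dgc] := expr_one_add c Dg.
have [s'' [I'' [J'' [K'' Du]]]] := ev_upoly_expM s I J K s' I' J' K' c w.
exists (('X - 1) ^+ 5 * q * m%:P + h' + Ac + (c%:Z * e)%:P * ('X - 1) ^+ k * h
        + Ac * ('X - 1) ^+ k.+1 * h), s'', I'', J'', K''.
have Dce : (c%:Z * e)%:~R = m%:~R * 3 - h.[1]%:~R :> R[i].
  by rewrite -[LHS](addrK h.[1]%:~R) -intrD Dm intrM.
by rewrite Du -mulrA Duf Dgc !evE Dce Dh three_dvd_w1 !evE !exprS; ring.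
Qed.

(* The cofactors come from expanding each unit around x = 1 in Z[x]; the
   multiples of 3 among the low order coefficients are absorbed through
   3 = (w - 1)^6 q(w). *)
Lemma unit_gen1 :
  exists A, ev (upoly false 1 0 0) w = 1 + 1%:~R * (w - 1) ^+ 1 + (w - 1) ^+ 2 * ev A w.
Proof. by exists 0; rewrite ev_upoly !evE /=; ring. Qed.

Lemma unit_gen2 :
  exists A, ev (upoly true 1 1 0) w = 1 + (-1)%:~R * (w - 1) ^+ 2 + (w - 1) ^+ 3 * ev A w.
Proof.
exists (- (('X - 1) ^+ 3 * q * 'X)).
by apply: (eq_mod_three (c := - w)); rewrite ev_upoly !evE /=; ring.
Qed.

Lemma unit_gen3 :
  exists A, ev (upoly false 3 0 0) w = 1 + 1%:~R * (w - 1) ^+ 3 + (w - 1) ^+ 4 * ev A w.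
Proof.
exists (('X - 1) ^+ 2 * q * ('X - 1 + ('X - 1) ^+ 2)).
by apply: (eq_mod_three (c := w - 1 + (w - 1) ^+ 2)); rewrite ev_upoly !evE /=; ring.
Qed.

Lemma unit_gen4 :
  exists A, ev (upoly true 6 2 1) w = 1 + 1%:~R * (w - 1) ^+ 4 + (w - 1) ^+ 5 * ev A w.
Proof.
pose B : {poly int} := (-3)%:P + (-24)%:P * ('X - 1) + (-102)%:P * ('X - 1) ^+ 2
  + (-272)%:P * ('X - 1) ^+ 3 + (-507)%:P * ('X - 1) ^+ 4.
pose A : {poly int} := (-2072)%:P + (-2101)%:P * ('X - 1) + (-1582)%:P * ('X - 1) ^+ 2
  + (-871)%:P * ('X - 1) ^+ 3 + (-340)%:P * ('X - 1) ^+ 4 + (-89)%:P * ('X - 1) ^+ 5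
  + (-14)%:P * ('X - 1) ^+ 6 - ('X - 1) ^+ 7.
exists (A + ('X - 1) * q * B).
by apply: (eq_mod_three (c := ev B w)); rewrite ev_upoly /A /B !evE; ring.
Qed.

Lemma unit_gen6 :
  exists A, ev (upoly true 3 3 0) w = 1 + (-1)%:~R * (w - 1) ^+ 6 + (w - 1) ^+ 7 * ev A w.
Proof.
pose B : {poly int} := (-12)%:P + (-22)%:P * ('X - 1) + (-21)%:P * ('X - 1) ^+ 2
  + (-11)%:P * ('X - 1) ^+ 3 + (-3)%:P * ('X - 1) ^+ 4.
exists (q * B - ('X - 1) ^+ 5 * q ^+ 2).
apply: (eq_mod_three (c := (w - 1) * ev B w - 3 - (w - 1) ^+ 6 * ev q w)).
by rewrite ev_upoly /B !evE; ring.
Qed.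

Lemma congr1_upto_unit1 f : ~~ (3 %| f.[1])%Z -> congr1_upto_unit w 1 f.
Proof.
move=> f3; have [f' Df] := ev_taylor1 f w.
have [s [m Dm]] : exists (s : bool) (m : int), f.[1] = (-1) ^+ s + m * 3.
  have : (f.[1] %% 3 = 1 \/ f.[1] %% 3 = 2)%Z by lia.
  case=> ?; [exists false, ((f.[1] - 1) %/ 3)%Z | exists true, ((f.[1] + 1) %/ 3)%Z].
    by rewrite expr0; lia.
  by rewrite expr1; lia.
exists ((-1) ^+ s *: (f' + ('X - 1) ^+ 5 * q * m%:P)), s, 0%N, 0%N, 0%N.
rewrite ev_upoly -mul_polyC !evE Df {}Dm intrD intrM mulrz_nat three_dvd_w1 !evE.
by case: s; rewrite /= ?expr0 ?expr1; ring.
Qed.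

Lemma congr1_upto_unit5 f : ~~ (3 %| f.[1])%Z -> congr1_upto_unit w 5 f.
Proof.
move=> f3.
apply: (congr1_upto_unit_lift _ unit_gen4) => //.
apply: (congr1_upto_unit_lift _ unit_gen3) => //.
apply: (congr1_upto_unit_lift _ unit_gen2) => //.
apply: (congr1_upto_unit_lift _ unit_gen1) => //.
exact: congr1_upto_unit1.
Qed.

Lemma congr1_upto_unit7 f h s I J K :
  ev (upoly s I J K) w * ev f w = 1 + (w - 1) ^+ 5 * ev h w ->
  (3 %| h.[1])%Z -> congr1_upto_unit w 7 f.
Proof.
move=> Duf /dvdzP [m Dm].
apply: (congr1_upto_unit_lift _ unit_gen6) => //.
have [h' Dh] := ev_taylor1 h w.
exists (h' + ('X - 1) ^+ 5 * q * m%:P), s, I, J, K.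
by rewrite Duf Dh Dm intrM mulrz_nat three_dvd_w1 !evE /=; ring.
Qed.
End Lifting.

Section ThreeAtOmega.
Variable R : realType.

Lemma three_omega_w1 k : exists q, 3 = (omega R k.+2 - 1) ^+ 6 * ev q (omega R k.+2).
Proof.
set w := omega R k.+2; set S : {poly int} := \sum_(j < 3 ^ k) 'X ^+ j.
have ES : ev S w = \sum_(j < 3 ^ k) w ^+ j.
  rewrite /ev rmorph_sum horner_sum; apply: eq_bigr => j _.
  by have := evXn 'X j w; rewrite evX.
have Dz : omega R 2 = w ^+ (3 ^ k) by rewrite -[in LHS](omega_expn3 R 2 k) addn2.
have z_w1 : omega R 2 - 1 = (w - 1) * ev S w by rewrite Dz ES subrX1.
have three_z : 3 = (omega R 2 - 1) ^+ 6 * (10 + 11 * omega R 2 + 7 * omega R 2 ^+ 2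
    + 10 * omega R 2 ^+ 3 + 4 * omega R 2 ^+ 4 - 4 * omega R 2 ^+ 5).
  by ring: (omega2_Phi9 R).
exists (S ^+ 6 * (10 + 11 * 'X ^+ (3 ^ k) + 7 * 'X ^+ (3 ^ k * 2) + 10 * 'X ^+ (3 ^ k * 3)
    + 4 * 'X ^+ (3 ^ k * 4) - 4 * 'X ^+ (3 ^ k * 5))).
by rewrite {1}three_z z_w1 Dz !evE !exprM; ring.
Qed.

Lemma omega2_w1_sixth : exists r, (omega R 2 - 1) ^+ 6 = 3 * ev r (omega R 2) /\ r.[1] = -1.
Proof.
exists (- 2 * 'X + 5 * 'X ^+ 2 - 7 * 'X ^+ 3 + 5 * 'X ^+ 4 - 2 * 'X ^+ 5).
by split; [rewrite !evE; ring: (omega2_Phi9 R) | rewrite !hornerE].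
Qed.
End ThreeAtOmega.

Section OneSubW.
Variables (R : realType) (w : R[i]) (q r : {poly int}).
Hypothesis three_w1 : 3 = (w - 1) ^+ 6 * ev q w.
Hypothesis w1_sixth : (w - 1) ^+ 6 = 3 * ev r w.
Hypothesis r1 : r.[1] = -1.

Definition congr_one_sub_w (c0 c1 : int) (x : R[i]) := exists t,
  x = 1 - w + 3 * (c0%:~R + c1%:~R * (w - 1)) + 3 * (w - 1) ^+ 2 * ev t w.

Lemma congr_one_sub_w_mul x h :
  x = 1 + (w - 1) ^+ 5 * ev h w -> exists c1, congr_one_sub_w h.[1] c1 ((1 - w) * x).
Proof.
move=> ->; have [z' Dz] := ev_taylor1 (- (r * h)) w.
have [z'' Dz'] := ev_taylor1 z' w.
exists z'.[1], z''.
have Drh : ev r w * ev h w = - ev (- (r * h)) w by rewrite evN evM opprK.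
rewrite (_ : _ * (1 + _) = 1 - w - (w - 1) ^+ 6 * ev h w); last by ring.
by rewrite w1_sixth -mulrA Drh Dz Dz' hornerN hornerM r1 mulN1r opprK; ring.
Qed.

Lemma congr_one_sub_w_mod3 c0 c1 c0' c1' x :
  (3 %| c0 - c0')%Z -> (3 %| c1 - c1')%Z ->
  congr_one_sub_w c0 c1 x -> congr_one_sub_w c0' c1' x.
Proof.
move=> /dvdzP [m0 Dm0] /dvdzP [m1 Dm1] [t ->].
exists (t + ('X - 1) ^+ 4 * q * (m0%:P + m1%:P * ('X - 1))).
apply: (eq_mod_three three_w1 (c := 3 * (m0%:~R + m1%:~R * (w - 1)))).
have -> : c0 = c0' + m0 * 3 by rewrite -Dm0; ring.
have -> : c1 = c1' + m1 * 3 by rewrite -Dm1; ring.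
by rewrite !evE !rmorphD !rmorphM /=; ring.
Qed.

Lemma congr_one_sub_w_gen6 c0 c1 x :
  congr_one_sub_w c0 c1 x -> congr_one_sub_w c0 (c1 - 1) (ev (upoly true 3 3 0) w * x).
Proof.
move=> [t Dx].
have [A DG] := unit_gen6 three_w1.
have [r' Dr] := ev_taylor1 r w; rewrite r1 in Dr.
set L := c0%:P + c1%:P * ('X - 1).
set X := ('X - 1) ^+ 4 * q * L + ('X - 1) ^+ 6 * q * t.
set B := r' + A; set C := r' * A.
have Dx' : x = 1 - w + (w - 1) ^+ 2 * ev X w.
  by rewrite Dx /X /L {1 2}three_w1 !evE; ring.
have DG' : ev (upoly true 3 3 0) w = 1 + 3 * ev (1 - ('X - 1) * B + ('X - 1) ^+ 2 * C) w.
  by rewrite DG (exprS _ 6) w1_sixth /B /C Dr !evE; ring.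
exists (t + X + B - ('X - 1) * B * X - ('X - 1) * C + ('X - 1) ^+ 2 * C * X).
by rewrite DG' mulrDl mul1r {1}Dx Dx' !evE; ring.
Qed.

Lemma congr_one_sub_w_gen6X c0 c1 x k :
  congr_one_sub_w c0 c1 x ->
  congr_one_sub_w c0 (c1 - k%:Z) (ev (upoly true 3 3 0) w ^+ k * x).
Proof.
move=> cx; elim: k => [|k IHk]; first by rewrite mul1r subr0.
have -> : c1 - k.+1%:Z = c1 - k%:Z - 1 by lia.
by rewrite exprS -mulrA; apply: congr_one_sub_w_gen6.
Qed.

Lemma congr_one_sub_w_unit f h s I J K :
  ev (upoly s I J K) w * ev f w = 1 + (w - 1) ^+ 5 * ev h w -> ~~ (3 %| h.[1])%Z ->
  exists t s' I' J' K' (dl : {poly int}), (dl = 'X \/ dl = -1) /\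
    (1 - w) * ev (upoly s' I' J' K') w * ev f w
      = 1 - w + 3 * ev dl w + 3 * (w - 1) ^+ 2 * ev t w.
Proof.
move=> Duf h3; have [c1 cx] := congr_one_sub_w_mul Duf.
have [b hb] : exists b : bool, (3 %| h.[1] - (if b then 1 else -1))%Z.
  have : (h.[1] %% 3 = 1 \/ h.[1] %% 3 = 2)%Z by lia.
  by case=> ?; [exists true | exists false]; lia.
have [k k3] := @exists_mul_add_dvd3 (-1) (c1 - b%:Z) isT.
have {}k3 : (3 %| c1 - k%:Z - b%:Z)%Z by move: k3; lia.
have [s' [I' [J' [K' Du]]]] := ev_upoly_expM true 3 3 0 s I J K k w.
have [t Dx] := congr_one_sub_w_mod3 hb k3 (congr_one_sub_w_gen6X k cx).
exists t, s', I', J', K', (if b then 'X else -1).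
split; first by case: (b); [left | right].
rewrite Du (_ : _ * _ * ev f w
  = ev (upoly true 3 3 0) w ^+ k * ((1 - w) * (ev (upoly s I J K) w * ev f w))); last by ring.
by rewrite Dx; case: (b); rewrite !evE /=; ring.
Qed.
End OneSubW.

Theorem lemma4p1 (R : realType) (f : {poly int}) (n : int)
  (hn : N1 R f = n%:~R) (h3 : ~~ (3 %| n)%Z) :
  (* (i) *)
  (let w := omega R 1 in
   exists (J : nat) (s : bool) (A b : int) (d : int),
     (J < 3)%N /\
     [\/ ((n %% 9)%Z = 1 /\ d = 1), ((n %% 9)%Z = 4 /\ d = 2)
       | ((n %% 9)%Z = 7 /\ d = 4)] /\
     (-1) ^+ s * w ^+ J * ev f w
       = d%:~R + 3 * A%:~R * (w - 1) + 9 * b%:~R /\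
     (-1) ^+ s * w ^+ J * ev f w * (1 - w)
       = d%:~R * (1 - w) + 9 * A%:~R + 9 * (b - A)%:~R * (1 - w)) /\
  (* (ii) *)
  (forall i : nat, (2 <= i)%N ->
     exists (h : {poly int}) (s : bool) (I J K : nat),
       ev (upoly s I J K) (omega R i) * ev f (omega R i)
         = 1 + (omega R i - 1) ^+ 5 * ev h (omega R i)) /\
  (* (iii) *)
  (forall (i : nat) (h : {poly int}) (s : bool) (I J K : nat), (2 <= i)%N ->
     ev (upoly s I J K) (omega R i) * ev f (omega R i)
       = 1 + (omega R i - 1) ^+ 5 * ev h (omega R i) ->
     (3 %| h.[1])%Z ->
     exists (t : {poly int}) (s' : bool) (I' J' K' : nat),
       ev (upoly s' I' J' K') (omega R i) * ev f (omega R i)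
         = 1 + (omega R i - 1) ^+ 7 * ev t (omega R i)) /\
  (* (iv) *)
  (forall (h : {poly int}) (s : bool) (I J K : nat),
     ev (upoly s I J K) (omega R 2) * ev f (omega R 2)
       = 1 + (omega R 2 - 1) ^+ 5 * ev h (omega R 2) ->
     ~~ (3 %| h.[1])%Z ->
     exists (t : {poly int}) (s' : bool) (I' J' K' : nat) (dl : {poly int}),
       (dl = 'X \/ dl = -1) /\
       (1 - omega R 2) * ev (upoly s' I' J' K') (omega R 2) * ev f (omega R 2)
         = 1 - omega R 2 + 3 * ev dl (omega R 2)
           + 3 * (omega R 2 - 1) ^+ 2 * ev t (omega R 2)).
Proof.
have f1 := N1_not_dvd3_horner1 hn h3.
have three_w1 i : (2 <= i)%N -> exists q, 3 = (omega R i - 1) ^+ 6 * ev q (omega R i).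
  by case: i => [|[|k]] // _; exact: three_omega_w1.
split.
  have [J [s [A [b [d [J3 dn E1 E2]]]]]] := omega1_normal_form hn h3.
  by exists J, s, A, b, d.
split=> [i /three_w1 [q q3]|]; first exact (congr1_upto_unit5 q3 f1).
split=> [i h s I J K /three_w1 [q q3] Duf h1|]; first exact (congr1_upto_unit7 q3 Duf h1).
have [q q3] := three_omega_w1 R 0.
have [r [r6 r1]] := omega2_w1_sixth R.
move=> h s I J K Duf h1; exact (congr_one_sub_w_unit q3 r6 r1 Duf h1).
Qed.
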